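(* There are absolute constants $c,C>0$ such that for every integer $d\ge 2$ there exist a set $\mathcal P$ of $n$ points and a set $\mathcal H$ of $m$ hyperplanes in $\mathbb R^d$ (with $n,m\ge 1$) satisfying \[\operatorname{I}(\mathcal P,\mathcal H)\ \ge\ c\,\frac{nm}{\sqrt d}\qquad\text{and}\qquad \operatorname{rs}(\mathcal P,\mathcal H)\ \le\ C\,\frac{mn\,2^{-d}}{\sqrt d}.\]
   Context: A point $p$ and a hyperplane $h$ are incident if $p\in h$. For a finite point set $\mathcal P$ and finite hyperplane set $\mathcal H$ in $\mathbb R^d$, $\operatorname{I}(\mathcal P,\mathcal H)$ is the number of incident pairs $(p,h)\in\mathcal P\times\mathcal H$, and $\operatorname{rs}(\mathcal P,\mathcal H)=\max_{S}\,|\{p\in\mathcal P: p\in S\}|\cdot|\{h\in\mathcal H: S\subseteq h\}|$, the maximum over all affine subspaces $S\subseteq\mathbb R^d$. *)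

From Stdlib Require Import Rdefinitions.
From HB Require Import structures.
From mathcomp Require Import all_boot all_order all_algebra.
From mathcomp Require Import boolp classical_sets.
From mathcomp Require Import Rstruct.
Set Implicit Arguments. Unset Strict Implicit. Unset Printing Implicit Defensive.
Import Order.TTheory GRing.Theory Num.Theory.
Local Open Scope ring_scope.
Local Open Scope classical_set_scope.

Definition on_hp (d : nat) (h : 'rV[R]_d * R) (x : 'rV[R]_d) : bool :=
  \sum_(i < d) h.1 0 i * x 0 i == h.2.

Definition hp_set (d : nat) (h : 'rV[R]_d * R) : set 'rV[R]_d :=
  [set x | on_hp h x].

Definition hyperplane_family (d : nat) (H : seq ('rV[R]_d * R)) : Prop :=
  (forall h, h \in H -> h.1 != 0) /\
  (forall i j : nat, (i < size H)%N -> (j < size H)%N -> i <> j ->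
     hp_set (nth (0, 0) H i) <> hp_set (nth (0, 0) H j)).

Definition affine_subspace (d : nat) (S : set 'rV[R]_d) : Prop :=
  exists (x0 : 'rV[R]_d) (U : 'M[R]_d), S = [set x : 'rV[R]_d | (x - x0 <= U)%MS].

Definition incidences (d : nat) (P : seq 'rV[R]_d) (H : seq ('rV[R]_d * R)) : nat :=
  \sum_(p <- P) count (fun h => on_hp h p) H.

Definition rs_value (d : nat) (P : seq 'rV[R]_d) (H : seq ('rV[R]_d * R))
  (S : set 'rV[R]_d) : nat :=
  (count (fun p => `[< S p >]) P * count (fun h => `[< S `<=` hp_set h >]) H)%N.

(* rs(P, H) <= X, i.e. the maximum over all affine subspaces S of
   rs_value P H S is at most X. (The empty subspace contributes 0.) *)
Definition rs_le (d : nat) (P : seq 'rV[R]_d) (H : seq ('rV[R]_d * R)) (X : R) : Prop :=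
  forall S, affine_subspace S -> (rs_value P H S)%:R <= X.

From Stdlib Require Import Rdefinitions.
From mathcomp Require Import all_boot all_order all_algebra.
From mathcomp Require Import Rstruct.
From mathcomp Require Import boolp classical_sets.
From mathcomp Require Import zify ring lra.
Set Implicit Arguments. Unset Strict Implicit. Unset Printing Implicit Defensive.
Import Order.TTheory GRing.Theory Num.Theory.
Local Open Scope ring_scope.

(* Points: the 2^d sign vectors {-1,1}^d.  Hyperplanes: <a, x> = k for every
   sign vector a with a_0 = 1 (2^(d-1) normals) and every integer level
   |k| <= T, where T = 2 floor(sqrt d) + 1, so there are L = 2T+1 = Theta(sqrt d)
   levels per normal.

   For a fixed normal a, sum_x <a, x>^2 = d 2^d over the cube, so by
   Chebyshev at least 3/4 of the points satisfy |<a, x>| <= T and lie on exactly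
   one hyperplane with normal a; hence I >= (3/4) 2^d 2^(d-1) = Theta(nm / sqrt d).

   If an affine subspace S contains the cube points X and lies in
   hyperplanes whose normals form Y (each normal can contain S at one level only),
   then <y, x> is constant on X for every y in Y.  The combinatorial core of the
   file is that two sets X, Y of sign vectors with (x1 - x2) . (y1 - y2) = 0 for all
   choices satisfy |X| |Y| <= 2^d; it is proved by induction on d, splitting off
   the first coordinate.  Thus rs <= 2^d = O(mn 2^-d / sqrt d).

   The construction lemmas are stated in dimension d.+1, so that normals have a
   first coordinate. *)

Definition sg (b : bool) : int := if b then 1 else -1.

Fixpoint dot (x y : seq bool) : int :=
  match x, y with a :: x', b :: y' => sg a * sg b + dot x' y' | _, _ => 0 end.

Fixpoint cube (d : nat) : seq (seq bool) :=
  if d is d'.+1 then map (cons true) (cube d') ++ map (cons false) (cube d')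
  else [:: [::]].

Lemma size_cube d : size (cube d) = (2 ^ d)%N.
Proof. by elim: d => //= d IH; rewrite size_cat !size_map IH expnS mul2n addnn. Qed.

Lemma size_cube_mem d s : s \in cube d -> size s = d.
Proof.
elim: d s => [|d IH] s /=; first by rewrite inE => /eqP->.
by rewrite mem_cat => /orP[] /mapP[t /IH <- ->].
Qed.

Lemma uniq_cube d : uniq (cube d).
Proof.
elim: d => //= d IH.
have inj (b : bool) : injective (cons b) by move=> ? ? [].
rewrite cat_uniq !(map_inj_uniq (inj _)) IH andbT /=.
by apply/hasPn => s /mapP[t _ ->]; apply/negP => /mapP[u _].
Qed.

Lemma dotC x y : dot x y = dot y x.
Proof. by elim: x y => [|a x IH] [|b y] //=; rewrite IH mulrC. Qed.

(* Second moment: for a fixed sign vector a, sum over the cube of <a, x>^2 is d 2^d,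
   as the cross terms cancel coordinate by coordinate. *)
Lemma sum_dot_sqr d a : size a = d ->
  \sum_(s <- cube d) dot a s ^+ 2 = (d * 2 ^ d)%N%:Z.
Proof.
elim: d a => [|d IH] [|a0 a] //= => [_|[sa]]; first by rewrite big_seq1.
rewrite big_cat !big_map /= -big_split /=.
rewrite (eq_bigr (fun s => 2 + 2 * dot a s ^+ 2)); last first.
  by move=> s _; case: a0; rewrite /= ?mulr1 ?mulrN1; ring.
rewrite big_split /= -mulr_sumr IH // big_const_seq count_predT iter_addr_0 size_cube expnS.
apply/eqP; rewrite -natz; lia.
Qed.

Lemma count_mul_le_sum (T : Type) (r : seq T) (P : pred T) (f : T -> int) (c : int) :
  (forall s, 0 <= f s) -> (forall s, P s -> c <= f s) ->
  (count P r)%:Z * c <= \sum_(s <- r) f s.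
Proof.
move=> f_ge0 f_geP; elim: r => [|s r IH]; first by rewrite big_nil mul0r.
rewrite big_cons /= PoszD mulrDl; apply: lerD => //.
by case: (boolP (P s)) => Ps; rewrite ?mul1r ?mul0r ?f_geP.
Qed.

(* Chebyshev: if 4d <= (T+1)^2, at least 3/4 of the cube satisfies |<a, x>| <= T. *)
Lemma count_small_dot d a T : size a = d -> (0 < d)%N -> (4 * d <= T.+1 ^ 2)%N ->
  (3 * 2 ^ d <= 4 * count (fun s => `|dot a s| <= T)%N (cube d))%N.
Proof.
move=> sa d_gt0 dT.
have split_count : (count (fun s => `|dot a s| <= T)%N (cube d)
    + count (fun s => T < `|dot a s|)%N (cube d) = 2 ^ d)%N.
  rewrite -size_cube -(count_predC (fun s => `|dot a s| <= T)%N).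
  by congr (_ + _)%N; apply: eq_count => s /=; rewrite ltnNge.
have chebyshev : (count (fun s => T < `|dot a s|)%N (cube d) * T.+1 ^ 2 <= d * 2 ^ d)%N.
  rewrite -lez_nat PoszM -(sum_dot_sqr sa).
  apply: count_mul_le_sum => [s|s /= large]; first exact: sqr_ge0.
  by move: large; set z := dot a s; rewrite -natz natrX; nia.
nia.
Qed.

(* X and Y are orthogonal as affine sets: (x1 - x2) . (y1 - y2) = 0. *)
Definition orth (X Y : seq (seq bool)) : Prop :=
  forall x1 x2 y1 y2, x1 \in X -> x2 \in X -> y1 \in Y -> y2 \in Y ->
    dot x1 y1 + dot x2 y2 = dot x1 y2 + dot x2 y1.

Definition sized (d : nat) (X : seq (seq bool)) : bool := all (fun x => size x == d) X.

Lemma orth_sym X Y : orth X Y -> orth Y X.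
Proof.
move=> oXY y1 y2 x1 x2 y1Y y2Y x1X x2X.
by rewrite !(dotC y1) !(dotC y2) (oXY x1 x2 y1 y2) // addrC.
Qed.

Lemma sized_cons d X x : sized d.+1 X -> x \in X -> x = head false x :: behead x.
Proof. by move=> /allP sX /sX; case: x. Qed.

Lemma sized_behead d X : sized d.+1 X -> sized d [seq behead x | x <- X].
Proof. by move=> /allP sX; apply/allP => _ /mapP[x /sX /eqP sx ->]; rewrite size_behead sx. Qed.

Lemma dot_expand d X Y x y : sized d.+1 X -> sized d.+1 Y -> x \in X -> y \in Y ->
  dot x y = sg (head false x) * sg (head false y) + dot (behead x) (behead y).
Proof. by move=> sX sY xX yY; rewrite {1}(sized_cons sX xX) {1}(sized_cons sY yY). Qed.

Lemma orth_tails d X Y b : sized d.+1 X -> sized d.+1 Y -> orth X Y ->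
  orth [seq behead x | x <- X & head false x == b] [seq behead y | y <- Y].
Proof.
move=> sX sY oXY u1 u2 v1 v2.
move=> /mapP[x1 /[!mem_filter] /andP[/eqP h1 x1X] ->].
move=> /mapP[x2 /[!mem_filter] /andP[/eqP h2 x2X] ->].
move=> /mapP[y1 y1Y ->] /mapP[y2 y2Y ->].
have := oXY x1 x2 y1 y2 x1X x2X y1Y y2Y.
rewrite !(dot_expand sX sY x1X) // !(dot_expand sX sY x2X) // h1 h2.
move: (sg b * _) (sg b * _) => u v.
by rewrite addrACA [RHS]addrACA (addrC v u) => /addrI.
Qed.

Lemma collision_of_not_uniq_map (T U : eqType) (f : T -> U) (s : seq T) :
  uniq s -> ~~ uniq (map f s) ->
  exists x1 x2, [/\ x1 \in s, x2 \in s, x1 != x2 & f x1 = f x2].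
Proof.
elim: s => [|x s IH] //= /andP[xs us]; rewrite negb_and negbK => /orP[/mapP[y ys fx]|].
  by exists x, y; rewrite mem_head inE ys orbT; split=> //; apply: contraNneq xs => ->.
by case/(IH us) => x1 [x2 [x1s x2s ne e]]; exists x1, x2; rewrite !inE x1s x2s !orbT.
Qed.

(* If two vectors of Y differ only in their first coordinate, then orthogonality
   forces the first coordinate to be constant on every fibre of behead on X,
   i.e. behead is injective on X. *)
Lemma collision_forces_injective d X Y y1 y2 : sized d.+1 X -> sized d.+1 Y -> orth X Y ->
  y1 \in Y -> y2 \in Y -> y1 != y2 -> behead y1 = behead y2 -> {in X &, injective behead}.
Proof.
move=> sX sY oXY y1Y y2Y y12 ty x1 x2 x1X x2X tx.
have hy : head false y1 != head false y2.
  by apply: contra y12 => /eqP hy; rewrite (sized_cons sY y1Y) (sized_cons sY y2Y) hy ty.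
have := oXY x1 x2 y1 y2 x1X x2X y1Y y2Y.
rewrite !(dot_expand sX sY x1X) // !(dot_expand sX sY x2X) // tx ty.
rewrite (sized_cons sX x1X) (sized_cons sX x2X) tx => e.
congr cons; move: e hy.
by case: (head false x1); case: (head false x2);
   case: (head false y1); case: (head false y2) => //=; lia.
Qed.

Definition orth_bound_at (d : nat) : Prop :=
  forall X Y, uniq X -> uniq Y -> sized d X -> sized d Y -> orth X Y ->
  (size X * size Y <= 2 ^ d)%N.

(* Induction step when behead is injective on Y: split X by its first coordinate
   and apply the bound in dimension d to each half. *)
Lemma orth_bound_split d : orth_bound_at d ->
  forall X Y, uniq X -> uniq [seq behead y | y <- Y] -> sized d.+1 X -> sized d.+1 Y ->
  orth X Y -> (size X * size Y <= 2 ^ d.+1)%N.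
Proof.
move=> IH X Y uX uY sX sY oXY.
pose part b := [seq behead x | x <- X & head false x == b].
have part_bound b : (size (part b) * size Y <= 2 ^ d)%N.
  rewrite -(size_map behead Y); apply: IH => //; last exact: orth_tails sX sY oXY.
  - rewrite map_inj_in_uniq ?filter_uniq // => x1 x2.
    rewrite !mem_filter => /andP[/eqP h1 x1X] /andP[/eqP h2 x2X] tx.
    by rewrite (sized_cons sX x1X) (sized_cons sX x2X) h1 h2 tx.
  - apply: sized_behead; rewrite /sized all_filter.
    by apply: sub_all sX => x /= ->; rewrite implybT.
  - exact: sized_behead.
have -> : size X = (size (part true) + size (part false))%N.
  rewrite !size_map !size_filter -(count_predC [pred x | head false x == true]).
  by congr addn; apply: eq_count => x /=; case: (head false x).
by rewrite expnS; have := part_bound true; have := part_bound false; nia.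
Qed.

(* |X| |Y| <= 2^d for orthogonal sets of sign vectors.  In the step, behead is
   injective on Y or, by the collision lemma, on X; use the symmetry of orth. *)
Lemma orth_bound d : orth_bound_at d.
Proof.
elim: d => [|d IH] X Y uX uY sX sY oXY.
  have at_most_one Z : uniq Z -> sized 0 Z -> (size Z <= 1)%N.
    move=> uZ /allP sZ; apply: (uniq_leq_size (s2 := [:: [::]])) => // z /sZ.
    by rewrite !inE size_eq0.
  by have := at_most_one X uX sX; have := at_most_one Y uY sY; nia.
have [uYt|] := boolP (uniq [seq behead y | y <- Y]); first exact: orth_bound_split.
case/(collision_of_not_uniq_map uY) => y1 [y2 [y1Y y2Y y12 ty]].
rewrite mulnC; apply: orth_bound_split (orth_sym oXY) => //.
by rewrite map_inj_in_uniq //; apply: (collision_forces_injective sX sY oXY y1Y y2Y y12 ty).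
Qed.

Lemma on_hpE d (h : 'rV[R]_d * R) x : on_hp h x = ((h.1 *m x^T) 0 0 == h.2).
Proof. by rewrite /on_hp mxE; congr (_ == _); apply: eq_bigr => i _; rewrite mxE. Qed.

(* A hyperplane determines its equation once the first normal coordinate is
   normalized to 1: test membership of the points (k - a_j) e_0 + e_j. *)
Lemma hp_set_inj d (h h' : 'rV[R]_d.+1 * R) :
  h.1 0 0 = 1 -> h'.1 0 0 = 1 -> hp_set h = hp_set h' -> h = h'.
Proof.
case: h h' => a k [b l] /= a00 b00 E.
pose q j : 'rV[R]_d.+1 := (k - a 0 j) *: delta_mx 0 0 + delta_mx 0 j.
have value (c : 'rV[R]_d.+1) j : (c *m (q j)^T) 0 0 = c 0 0 * (k - a 0 j) + c 0 j.
  by rewrite linearD linearZ /= mulmxDr -scalemxAr !trmx_delta -!colE !mxE mulrC.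
have on_b j : (k - a 0 j) + b 0 j = l.
  have : hp_set (a, k) (q j) by rewrite /hp_set /= on_hpE /= value a00 mul1r subrK.
  by rewrite E /hp_set /= on_hpE /= value b00 mul1r => /eqP.
have kl : k = l by have := on_b 0; rewrite a00 b00 subrK.
by congr pair => //; apply/rowP => j; have := on_b j; rewrite -kl; lra.
Qed.

Lemma hyperplane_family_normalized d (H : seq ('rV[R]_d.+1 * R)) :
  uniq H -> (forall h, h \in H -> h.1 0 0 = 1) -> hyperplane_family H.
Proof.
move=> uH n1; split=> [h /n1 h1|i j ilt jlt ij E].
  by apply/eqP => h0; move: h1; rewrite h0 mxE => /eqP; rewrite eq_sym oner_eq0.
have := nth_uniq (0, 0) ilt jlt uH.
rewrite (hp_set_inj (n1 _ (mem_nth _ ilt)) (n1 _ (mem_nth _ jlt)) E) eqxx.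
by move=> /esym /eqP.
Qed.

Definition vec d (s : seq bool) : 'rV[R]_d := \row_i (sg (nth false s i))%:~R.

Lemma dot_nth d a s : size a = d -> size s = d ->
  dot a s = \sum_(i < d) sg (nth false a i) * sg (nth false s i).
Proof.
elim: d a s => [|d IH] [|x a] [|y s] //= => [_ _|[sa] [ss]]; first by rewrite big_ord0.
by rewrite big_ord_recl IH.
Qed.

Lemma on_hp_vec d a s (k : int) : size a = d -> size s = d ->
  on_hp (vec d a, k%:~R) (vec d s) = (dot a s == k).
Proof.
move=> sa ss; rewrite /on_hp (dot_nth sa ss) /=.
under eq_bigr do rewrite !mxE -intrM.
by rewrite -rmorph_sum eqr_int.
Qed.

Lemma vec_inj d : {in cube d &, injective (vec d)}.
Proof.
move=> s t /size_cube_mem ss /size_cube_mem st e.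
apply: (@eq_from_nth _ false); first by rewrite ss st.
move=> i; rewrite ss => ilt.
have := congr1 (fun v : 'rV[R]_d => v 0 (Ordinal ilt)) e; rewrite !mxE /= => /intr_inj.
by case: (nth false s i); case: (nth false t i).
Qed.

Definition levels (T : nat) : seq int := [seq i%:Z - T%:Z | i <- iota 0 (2 * T).+1].

Lemma uniq_levels T : uniq (levels T).
Proof. by rewrite map_inj_uniq ?iota_uniq // => i j /addIr /eqP; rewrite eqz_nat => /eqP. Qed.

Lemma mem_levels T (D : int) : (D \in levels T) = (`|D| <= T)%N.
Proof.
apply/mapP/idP => [[i /[!mem_iota] /andP[_ ilt] ->]|DT]; first lia.
by exists (absz (D + T%:Z)); [rewrite mem_iota; lia | lia].
Qed.

Definition normals (d : nat) : seq (seq bool) := map (cons true) (cube d).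

Lemma normalsP d a : a \in normals d -> size a = d.+1 /\ head false a.
Proof. by case/mapP => s /size_cube_mem <- ->. Qed.

Lemma uniq_normals d : uniq (normals d).
Proof. by rewrite map_inj_uniq ?uniq_cube // => ? ? []. Qed.

Definition hyperplanes (d T : nat) : seq ('rV[R]_d.+1 * R) :=
  [seq (vec d.+1 a, k%:~R) | a <- normals d, k <- levels T].

Definition points (d : nat) : seq 'rV[R]_d := map (vec d) (cube d).

Lemma normals_sub_cube d : {subset normals d <= cube d.+1}.
Proof. by move=> a aN; rewrite /= mem_cat aN. Qed.

Lemma size_hyperplanes d T : size (hyperplanes d T) = (2 ^ d * (2 * T).+1)%N.
Proof. by rewrite size_allpairs !size_map size_cube size_iota. Qed.

Lemma uniq_hyperplanes d T : uniq (hyperplanes d T).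
Proof.
apply: allpairs_uniq => [||[a k] [a' k'] /allpairsP[[? ?] [aN _ [-> ->]]]];
  [exact: uniq_normals | exact: uniq_levels |].
move=> /allpairsP[[? ?] [a'N _ [-> ->]]] [/vec_inj e /intr_inj ->].
by rewrite e // normals_sub_cube.
Qed.

Lemma hyperplanes_normalized d T h : h \in hyperplanes d T -> h.1 0 0 = 1.
Proof. by case/allpairsP => -[a k] [/normalsP[_ ha] _ ->]; rewrite mxE; case: a ha => // -[]. Qed.

Lemma uniq_points d : uniq (points d).
Proof. by rewrite map_inj_in_uniq ?uniq_cube //; apply: vec_inj. Qed.

Lemma size_points d : size (points d) = (2 ^ d)%N.
Proof. by rewrite size_map size_cube. Qed.

Lemma count_sum (T : Type) (p : pred T) (r : seq T) : count p r = (\sum_(z <- r) p z)%N.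
Proof. by rewrite -sum1_count big_mkcond. Qed.

Lemma sum_count_exchange (A B : Type) (P : A -> B -> bool) (s : seq A) (t : seq B) :
  (\sum_(x <- s) count (P x) t = \sum_(y <- t) count (P^~ y) s)%N.
Proof.
rewrite (eq_bigr _ (fun x _ => count_sum _ _)) exchange_big /=.
by apply: eq_bigr => y _; rewrite count_sum.
Qed.

Lemma count_allpairs (A B C : Type) (f : A -> B -> C) (P : pred C) s t :
  count P [seq f x y | x <- s, y <- t] = (\sum_(x <- s) count (fun y => P (f x y)) t)%N.
Proof.
elim: s => [|x s IH]; first by rewrite big_nil.
by rewrite allpairs_cons count_cat big_cons IH count_map.
Qed.

Lemma count_incident d T x : size x = d.+1 ->
  count (fun h => on_hp h (vec d.+1 x)) (hyperplanes d T)
  = count (fun a => `|dot a x| <= T)%N (normals d).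
Proof.
move=> sx; rewrite count_allpairs count_sum; apply: eq_big_seq => a /normalsP[sa _].
rewrite (eq_count (a2 := pred1 (dot a x))) => [|k]; last by rewrite /= on_hp_vec // eq_sym.
by rewrite count_uniq_mem ?uniq_levels // mem_levels.
Qed.

Lemma incidences_lower d T : (4 * d.+1 <= T.+1 ^ 2)%N ->
  (3 * 2 ^ d.+1 * 2 ^ d <= 4 * incidences (points d.+1) (hyperplanes d T))%N.
Proof.
move=> dT; rewrite /incidences big_map.
rewrite (eq_big_seq _ (fun x xC => count_incident T (size_cube_mem xC))).
rewrite sum_count_exchange big_distrr /=.
have -> : (3 * 2 ^ d.+1 * 2 ^ d = \sum_(a <- normals d) 3 * 2 ^ d.+1)%N.
  by rewrite big_const_seq count_predT iter_addn_0 size_map size_cube.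
rewrite big_seq [leqRHS]big_seq; apply: leq_sum => a /normalsP[sa _].
exact: count_small_dot.
Qed.

Lemma orth_of_constant X Y :
  (forall y, y \in Y -> exists k, forall x, x \in X -> dot y x = k) -> orth X Y.
Proof.
move=> cst x1 x2 y1 y2 x1X x2X /cst[k1 e1] /cst[k2 e2].
by rewrite !(dotC x1) !(dotC x2) !e1 ?e2 // addrC.
Qed.

Section RichSubspaces.
Local Open Scope classical_set_scope.

(* Every set S of points, affine or not, has rs-value at most 2^(d+1): the normals
   of the hyperplanes containing S are orthogonal to the cube points in S, and each
   normal contributes at most one hyperplane containing a nonempty S. *)
Lemma rs_upper d T (S : set 'rV[R]_d.+1) :
  (rs_value (points d.+1) (hyperplanes d T) S <= 2 ^ d.+1)%N.
Proof.
pose X := [seq x <- cube d.+1 | `[< S (vec d.+1 x) >]].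
pose contains a k := `[< S `<=` hp_set (vec d.+1 a, k%:~R) >].
pose Y := [seq a <- normals d | has (contains a) (levels T)].
rewrite /rs_value count_map -size_filter -/X.
case eX: X => [|x0 Xr]; first by rewrite mul0n.
have x0X : x0 \in X by rewrite eX mem_head.
rewrite -eX; move: (x0X); rewrite mem_filter => /andP[/asboolP Sx0 /size_cube_mem sx0].
have fewH : (count (fun h => `[< S `<=` hp_set h >]) (hyperplanes d T) <= size Y)%N.
  rewrite count_allpairs size_filter count_sum big_seq [leqRHS]big_seq.
  apply: leq_sum => a /normalsP[sa _].
  case: (boolP (has _ _)) => [_|]; last by rewrite has_count lt0n negbK => /eqP ->.
  apply: (@leq_trans (count (pred1 (dot a x0)) (levels T))).
    by apply: sub_count => k /asboolP SH; rewrite /= eq_sym -(on_hp_vec k sa sx0); apply: SH.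
  by rewrite count_uniq_mem ?uniq_levels ?leq_b1.
apply: leq_trans (leq_mul (leqnn _) fewH) _.
apply: orth_bound.
- by rewrite filter_uniq ?uniq_cube.
- by rewrite filter_uniq ?uniq_normals.
- by apply/allP => x; rewrite mem_filter => /andP[_ /size_cube_mem ->].
- by apply/allP => a; rewrite mem_filter => /andP[_ /normalsP[-> _]].
apply: orth_of_constant => a; rewrite mem_filter => /andP[/hasP[k _ /asboolP SH] /normalsP[sa _]].
exists k => x; rewrite mem_filter => /andP[/asboolP Sx /size_cube_mem sx].
by apply/eqP; rewrite -(on_hp_vec k sa sx); apply: SH.
Qed.

End RichSubspaces.

Lemma ler_mul_sqrt (a m n : nat) : (a ^ 2 * n <= m ^ 2)%N -> a%:R * Num.sqrt n%:R <= m%:R :> R.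
Proof.
move=> h; have {h} : ((a ^ 2 * n)%:R <= (m ^ 2)%:R :> R) by rewrite ler_nat.
rewrite natrM !natrX => h.
have q0 := sqrtr_ge0 (n%:R : R); have q2 := sqr_sqrtr (ler0n R n).
have := ler0n R a; have := ler0n R m; nra.
Qed.

Lemma ger_mul_sqrt (a m n : nat) : (m ^ 2 <= a ^ 2 * n)%N -> m%:R <= a%:R * Num.sqrt n%:R :> R.
Proof.
move=> h; have {h} : ((m ^ 2)%:R <= (a ^ 2 * n)%:R :> R) by rewrite ler_nat.
rewrite natrM !natrX => h.
have q0 := sqrtr_ge0 (n%:R : R); have q2 := sqr_sqrtr (ler0n R n).
have := mulr_ge0 (ler0n R a) q0; have := ler0n R m; nra.
Qed.

(* The number of levels is 2T+1 with 2 sqrt d <= 2T+1 <= 7 sqrt d and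
   4d <= (T+1)^2, taking T = 2 floor(sqrt d) + 1. *)
Lemma level_choice d : (0 < d)%N -> exists T : nat,
  [/\ (4 * d <= T.+1 ^ 2)%N, (2 ^ 2 * d <= (2 * T).+1 ^ 2)%N & ((2 * T).+1 ^ 2 <= 7 ^ 2 * d)%N].
Proof.
move=> d_gt0; pose s := Nat.sqrt d.
have /andP[lo hi] : (s * s <= d < s.+1 * s.+1)%N.
  by have := Nat.sqrt_spec d (Nat.le_0_l _); rewrite -/s; lia.
by exists (2 * s).+1; split; nia.
Qed.

Lemma incidence_ratio (N M L I d : nat) : (0 < d)%N ->
  (3 * N * M <= 4 * I)%N -> (L ^ 2 <= 7 ^ 2 * d)%N ->
  1 / 10 * (N * (M * L))%:R / Num.sqrt d%:R <= I%:R :> R.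
Proof.
move=> d_gt0 NMI /ger_mul_sqrt Lq.
have q_gt0 : 0 < Num.sqrt (d%:R : R) by rewrite sqrtr_gt0 ltr0n.
have {NMI} : (3 * N * M)%:R <= (4 * I)%:R :> R by rewrite ler_nat.
rewrite ler_pdivrMr // !natrM => NMI.
have NM0 : 0 <= N%:R * M%:R :> R by rewrite mulr_ge0.
have := ler_wpM2l NM0 Lq; have := ler0n R I; nra.
Qed.

Lemma rs_ratio (r L d : nat) : (r <= 2 ^ d.+1)%N -> (2 ^ 2 * d.+1 <= L ^ 2)%N ->
  r%:R <= 1 * (2 ^ d * L * 2 ^ d.+1)%:R * 2 ^- d.+1 / Num.sqrt d.+1%:R :> R.
Proof.
move=> r_le /ler_mul_sqrt qL.
have q_gt0 : 0 < Num.sqrt (d.+1%:R : R) by rewrite sqrtr_gt0 ltr0n.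
rewrite mul1r natrM natrX mulfK ?expf_neq0 ?pnatr_eq0 // ler_pdivlMr // natrM natrX.
have {r_le} : r%:R <= (2 ^ d.+1)%:R :> R by rewrite ler_nat.
rewrite natrX exprS => r_le.
have := exprn_ge0 d (ler0n R 2); have := ler0n R r; nra.
Qed.

Theorem theorem1p6 :
  exists c C : R, 0 < c /\ 0 < C /\
  forall d : nat, (2 <= d)%N ->
  exists (P : seq 'rV[R]_d) (H : seq ('rV[R]_d * R)),
    uniq P /\ hyperplane_family H /\
    (0 < size P)%N /\ (0 < size H)%N /\
    c * (size P * size H)%:R / Num.sqrt d%:R <= (incidences P H)%:R /\
    rs_le P H (C * (size H * size P)%:R * 2 ^- d / Num.sqrt d%:R).
Proof.
exists (1 / 10), 1; split; first lra; split; first lra.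
case=> [//|d] _; have [T [dT Llo Lhi]] := level_choice (ltn0Sn d).
exists (points d.+1), (hyperplanes d T).
rewrite size_points size_hyperplanes; split; first exact: uniq_points.
split; first exact: hyperplane_family_normalized (uniq_hyperplanes d T)
                                                  (@hyperplanes_normalized d T).
split; first by rewrite expn_gt0.
split; first by rewrite muln_gt0 expn_gt0.
split; first exact: incidence_ratio (ltn0Sn d) (incidences_lower dT) Lhi.
by move=> S _; apply: rs_ratio (rs_upper T S) Llo.
Qed.
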